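(* $\widehat{\mathsf{C}^{\mathrm{cof}}_{\boldsymbol{\Sigma}^1_1,\mathbb{N}}}\le_{\mathrm{sW}} \mathsf{wFindHS}_{\boldsymbol{\Pi}^0_1}$.
   Context: Strong Weihrauch reducibility: $f\le_{\mathrm{sW}} g$ iff there are computable $\Phi,\Psi$ on Baire space such that $\Psi\circ G\circ\Phi$ realizes $f$ for every realizer $G$ of $g$. $\mathsf{C}^{\mathrm{cof}}_{\boldsymbol{\Sigma}^1_1,\mathbb{N}}$ is the partial multivalued function which, given a nonempty cofinite $\boldsymbol{\Sigma}^1_1$ subset $A\subseteq\mathbb{N}$ (named by a name of a closed set $C\subseteq\mathbb{N}\times\mathbb{N}^\mathbb{N}$ whose projection to $\mathbb{N}$ is $A$), returns an element of $A$. For a multivalued $f$, its parallelization $\widehat{f}$ maps a sequence $(x_n)_{n\in\mathbb{N}}$ of inputs of $f$ to the set of sequences $(y_n)_n$ with $y_n\in f(x_n)$ for all $n$. The Ramsey space $[\mathbb{N}]^\mathbb{N}$ is the set of strictly increasing functions $\mathbb{N}\to\mathbb{N}$ with Baire-space topology; $fg=f\circ g$. For $P\subseteq[\mathbb{N}]^\mathbb{N}$, $f$ is homogeneous for $P$ if either $fg\in P$ for all $g\in[\mathbb{N}]^\mathbb{N}$ or $fg\notin P$ for all $g$; $\mathrm{HS}(P)$ is the set of homogeneous solutions. Open sets of $[\mathbb{N}]^\mathbb{N}$ are named by enumerations of sets of finite strictly increasing strings whose cones have union the set. $\mathsf{wFindHS}_{\boldsymbol{\Pi}^0_1}$: input an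 open $P$ with $\mathrm{HS}(P)\cap P=\emptyset$, output any element of $\mathrm{HS}(P)\setminus P$. *)

From mathcomp Require Import all_boot.
Set Implicit Arguments. Unset Strict Implicit. Unset Printing Implicit Defensive.

Inductive prog : Type :=
| PZero
| PSucc
| PProj (i : nat)
| PComp (f : prog) (gs : seq prog)
| PRec (f g : prog)
| PMu (f : prog).

Inductive eval : prog -> seq nat -> nat -> Prop :=
| eZero a : eval PZero a 0
| eSucc a : eval PSucc a (head 0 a).+1
| eProj i a : eval (PProj i) a (nth 0 a i)
| eComp f gs a bs y : evals gs a bs -> eval f bs y -> eval (PComp f gs) a y
| eRec0 f g a y : eval f a y -> eval (PRec f g) (0 :: a) y
| eRecS f g n a r y : eval (PRec f g) (n :: a) r -> eval g (n :: r :: a) y ->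
                      eval (PRec f g) (n.+1 :: a) y
| eMu f a y : eval f (y :: a) 0 ->
              (forall z, z < y -> exists v, eval f (z :: a) v.+1) ->
              eval (PMu f) a y
with evals : seq prog -> seq nat -> seq nat -> Prop :=
| esNil a : evals [::] a [::]
| esCons g gs a b bs : eval g a b -> evals gs a bs -> evals (g :: gs) a (b :: bs).

Definition computable (h : nat -> nat) : Prop :=
  exists e : prog, forall n, eval e [:: n] (h n).

Definition cpair (a b : nat) : nat := ((a + b) * (a + b).+1)./2 + b.
Fixpoint code (s : seq nat) : nat :=
  if s is x :: s' then (cpair x (code s')).+1 else 0.

Definition baire := nat -> nat.
Definition prefix (p : baire) (k : nat) : seq nat := mkseq p k.

(* A total recursive h
   determines the partial map p |-> q where q n + 1 is the first nonzero
   value of h <n, code(p|k)>, k = 0,1,2,...  (this is a standard, equivalent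
   presentation of Type-2 computable partial functions). *)
Definition runs (h : nat -> nat) (p q : baire) : Prop :=
  forall n, exists k, h (cpair n (code (prefix p k))) = (q n).+1 /\
    forall k', k' < k -> h (cpair n (code (prefix p k'))) = 0.

Record repspace := RepSpace {
  carrier :> Type;
  names : baire -> carrier -> Prop
}.

Record mvf (X Y : repspace) := MVF {
  mdom : X -> Prop;
  mval : X -> Y -> Prop
}.

Definition realizer (X Y : repspace) (f : mvf X Y) (G : baire -> baire) : Prop :=
  forall (p : baire) (x : X), names p x -> mdom f x ->
    exists y : Y, mval f x y /\ names (G p) y.

Definition sW_reducible (X Y X' Y' : repspace) (f : mvf X Y) (g : mvf X' Y')
  : Prop :=
  exists hPhi hPsi : nat -> nat, computable hPhi /\ computable hPsi /\
    forall G : baire -> baire, realizer g G ->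
      forall (p : baire) (x : X), names p x -> mdom f x ->
        exists q : baire, runs hPhi p q /\
          exists r : baire, runs hPsi (G q) r /\
            exists y : Y, mval f x y /\ names r y.

Definition seqspace (X : repspace) : repspace :=
  @RepSpace (nat -> X)
    (fun p xs => forall i, names (fun j => p (cpair i j)) (xs i)).

Definition parallel (X Y : repspace) (f : mvf X Y) : mvf (seqspace X) (seqspace Y) :=
  @MVF (seqspace X) (seqspace Y)
    (fun xs => forall i, mdom f (xs i))
    (fun xs ys => forall i, mval f (xs i) (ys i)).

Definition natspace : repspace := @RepSpace nat (fun q n => q 0 = n).

(* Sigma^1_1 subsets of N, named by a name of a closed set C of N x N^N
   (closed sets named by trees: (n,x) in C iff p(code(n::x|k)) = 0 for all k)
   whose projection to N is A. *)
Definition closed_set_of (p : baire) : nat * baire -> Prop :=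
  fun nx => forall k, p (code (nx.1 :: prefix nx.2 k)) = 0.

Definition sigma11space : repspace :=
  @RepSpace (nat -> Prop)
    (fun p A => forall n, A n <-> exists x : baire, closed_set_of p (n, x)).

Definition Ccof_Sigma11_N : mvf sigma11space natspace :=
  @MVF sigma11space natspace
    (fun A => (exists n, A n) /\ (exists m, forall n, m <= n -> A n))
    (fun A n => A n).

Definition incr (f : baire) : Prop := forall n, f n < f n.+1.

Definition ramseyspace : repspace :=
  @RepSpace baire (fun q f => incr f /\ forall n, q n = f n).

(* open subsets of [N]^N: p enumerates (p n = code s + 1, 0 = nothing)
   a set S of strictly increasing finite strings with P = union of cones *)
Definition enumerated (p : baire) (s : seq nat) : Prop :=
  exists n, p n = (code s).+1.

Definition openspace : repspace :=
  @RepSpace (baire -> Prop)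
    (fun p P => (forall s, enumerated p s -> sorted ltn s) /\
       forall f, P f <-> incr f /\
         exists s, enumerated p s /\ prefix f (size s) = s).

Definition HS (P : baire -> Prop) (f : baire) : Prop :=
  incr f /\ ((forall g, incr g -> P (f \o g)) \/
             (forall g, incr g -> ~ P (f \o g))).

Definition wFindHS_Pi01 : mvf openspace ramseyspace :=
  @MVF openspace ramseyspace
    (fun P => forall f, ~ (HS P f /\ P f))
    (fun P f => HS P f /\ ~ P f).

(* The reduction maps names [p_i] of trees [T_i] (with cofinite projections
   [A_i]) to the open set [P] of increasing [f] having a prefix [s] and an
   [i < size s] such that every sequence starting with [s_i] and dominated
   pointwise by [s_(i+1), s_(i+2), ...] leaves [T_i]; this is witnessed by
   finitely many values of [p], so [P] is effectively open.
   No homogeneous [f] lies in [P]: otherwise every [f \o g] would, but a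
   fast-growing [g] makes [f (g k)] an element of [A_k] and lets the later
   entries dominate a branch of [T_k] above it.
   Conversely, if [y] is increasing and not in [P] then [y_i] is in [A_i]: if
   not, [T_i] has no branch above [y_i], so by Konig's lemma the branches
   dominated by [y_(i+1), y_(i+2), ...] die at a finite level [K], and the
   prefix of [y] of length [i + 1 + K] puts [y] into [P]. *)

From Pilot Require Import Defs.
From mathcomp Require Import all_boot zify.
From Stdlib Require Import Classical ClassicalEpsilon.
Set Implicit Arguments. Unset Strict Implicit. Unset Printing Implicit Defensive.

(** * Decoding pairs and sequences *)

Fixpoint tri (t : nat) : nat := if t is t'.+1 then tri t' + t else 0.

Lemma half_mulnS t : (t * t.+1)./2 = tri t.
Proof.
elim: t => [//|t IH].
have -> : t.+1 * t.+2 = t * t.+1 + (t.+1).*2 by rewrite -mul2n; lia.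
rewrite halfD doubleK odd_double andbF add0n IH /=; lia.
Qed.

Lemma cpairE a b : cpair a b = tri (a + b) + b.
Proof. by rewrite /cpair half_mulnS. Qed.

Lemma leq_tri t t' : t <= t' -> tri t <= tri t'.
Proof. by move=> /subnK <-; elim: (t' - t) => [|d IH] //=; lia. Qed.

Fixpoint tri_inv (c : nat) : nat :=
  if c is c'.+1 then
    if tri (tri_inv c').+1 <= c'.+1 then (tri_inv c').+1 else tri_inv c'
  else 0.

Lemma tri_invP c : tri (tri_inv c) <= c < tri (tri_inv c).+1.
Proof.
elim: c => [//|c IH] /=.
by case: ifP => H; rewrite /= in H IH *; lia.
Qed.

Lemma tri_inv_eq c t : tri t <= c < tri t.+1 -> tri_inv c = t.
Proof.
move=> Ht; have := tri_invP c.
by case: (ltngtP (tri_inv c) t) => // /leq_tri; lia.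
Qed.

Definition unpair2 c := c - tri (tri_inv c).
Definition unpair1 c := tri_inv c - unpair2 c.

Lemma tri_inv_cpair a b : tri_inv (cpair a b) = a + b.
Proof. by apply: tri_inv_eq; rewrite cpairE /=; lia. Qed.

Lemma unpair2_cpair a b : unpair2 (cpair a b) = b.
Proof. by rewrite /unpair2 tri_inv_cpair cpairE; lia. Qed.

Lemma unpair1_cpair a b : unpair1 (cpair a b) = a.
Proof. by rewrite /unpair1 unpair2_cpair tri_inv_cpair; lia. Qed.

Lemma unpairK c : cpair (unpair1 c) (unpair2 c) = c.
Proof.
have := tri_invP c; rewrite cpairE /unpair1 /unpair2 /= => Hc.
have -> : tri_inv c - (c - tri (tri_inv c)) + (c - tri (tri_inv c)) = tri_inv c by lia.
lia.
Qed.

Lemma leq_cpair a b a' b' : a <= a' -> b <= b' -> cpair a b <= cpair a' b'.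
Proof.
rewrite !cpairE => Ha Hb; have /leq_tri : a + b <= a' + b' by lia.
lia.
Qed.

Lemma leq_cpairr a b : b <= cpair a b.
Proof. rewrite cpairE; lia. Qed.

Definition ctail c := unpair2 c.-1.
Definition cdrop j c := iter j ctail c.
Definition cnth j c := unpair1 (cdrop j c).-1.
Definition csize c := count (fun j => cdrop j c != 0) (iota 0 c).

Lemma cdrop_code j s : cdrop j (code s) = code (drop j s).
Proof.
elim: j s => [|j IH] s; first by rewrite drop0.
rewrite /cdrop iterSr -/(cdrop j _).
case: s => [|x s]; first exact: (IH [::]).
by rewrite /ctail /= unpair2_cpair IH.
Qed.

Lemma cnth_code j s : cnth j (code s) = nth 0 s j.
Proof.
rewrite /cnth cdrop_code.
case: (ltnP j (size s)) => Hj.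
- by rewrite (drop_nth 0 Hj) /= unpair1_cpair.
- by rewrite drop_oversize //= nth_default.
Qed.

Lemma size_code s : size s <= code s.
Proof. by elim: s => //= x s IH; have := leq_cpairr x (code s); lia. Qed.

Lemma csize_code s : csize (code s) = size s.
Proof.
have drop_code0 j : (cdrop j (code s) != 0) = (j < size s).
  by rewrite cdrop_code; case: ltnP => Hj; [rewrite (drop_nth 0 Hj) | rewrite drop_oversize].
rewrite /csize -(subnKC (size_code s)) iotaD count_cat add0n.
rewrite (eq_in_count (a2 := predT)) ?count_predT ?size_iota; last first.
  by move=> j; rewrite mem_iota subnKC ?size_code // drop_code0; case/andP.
rewrite (eq_in_count (a2 := pred0)) ?count_pred0 ?addn0 //.
by move=> j; rewrite mem_iota subnKC ?size_code // drop_code0 /=; lia.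
Qed.

Lemma code_surj c : exists s, code s = c.
Proof.
elim/ltn_ind: c => [[|c]] IH; first by exists [::].
have [|s Hs] := IH (unpair2 c).
  by have := leq_cpairr (unpair1 c) (unpair2 c); rewrite unpairK; lia.
by exists (unpair1 c :: s); rewrite /= Hs unpairK.
Qed.

Definition dominated (bs sg : seq nat) :=
  size sg = size bs /\ forall j, j < size sg -> nth 0 sg j <= nth 0 bs j.

Lemma dominated_cons b bs x sg :
  dominated (b :: bs) (x :: sg) <-> x <= b /\ dominated bs sg.
Proof.
split=> [[/= [Hs] H]|[Hx [Hs H]]]; last by split=> [/=|[|j] /= Hj]; rewrite ?Hs //; apply: H.
by split; [exact: (H 0) | split=> // j; exact: (H j.+1)].
Qed.

Lemma leq_code_dominated bs sg : dominated bs sg -> code sg <= code bs.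
Proof.
elim: bs sg => [|b bs IH] [|x sg] //; first by case.
by case/dominated_cons=> Hx Hsg /=; rewrite ltnS leq_cpair // IH.
Qed.

Lemma code_take j s : code (take j s) <= code s.
Proof. by elim: s j => [|x s IH] [|j] //=; rewrite ltnS; apply: leq_cpair. Qed.

(** * Primitive recursive expressions *)

(* De Bruijn-indexed terms; in [ERec b s n] the step [s] sees the counter as
   variable 0 and the accumulator as variable 1. *)
Inductive pexpr : Type :=
| EVar (i : nat)
| EZero
| ESucc (e : pexpr)
| ERec (b s n : pexpr).

Definition scons (x : nat) (r : nat -> nat) : nat -> nat :=
  fun i => if i is i'.+1 then r i' else x.

Fixpoint nrec (b : nat) (st : nat -> nat -> nat) (n : nat) : nat :=
  if n is n'.+1 then st n' (nrec b st n') else b.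

Fixpoint interp (e : pexpr) (r : nat -> nat) : nat :=
  match e with
  | EVar i => r i
  | EZero => 0
  | ESucc e => (interp e r).+1
  | ERec b s n =>
      nrec (interp b r) (fun k x => interp s (scons k (scons x r))) (interp n r)
  end.

Lemma interp_var r i : interp (EVar i) r = r i. Proof. by []. Qed.
Lemma interp_succ r e : interp (ESucc e) r = (interp e r).+1. Proof. by []. Qed.
Lemma scons0 x r : scons x r 0 = x. Proof. by []. Qed.
Lemma sconsS x r i : scons x r i.+1 = r i. Proof. by []. Qed.

Lemma eq_nrec b st st' n : (forall k x, st k x = st' k x) -> nrec b st n = nrec b st' n.
Proof. by move=> H; elim: n => //= n ->. Qed.

Lemma eq_interp e r r' : (forall i, r i = r' i) -> interp e r = interp e r'.
Proof.
elim: e r r' => [i|| e IH| b IHb s IHs n IHn] r r' H //=.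
- by rewrite (IH _ r').
- rewrite (IHn r r') // (IHb r r') //; apply: eq_nrec => k x.
  by apply: IHs => -[|[|i]] /=.
Qed.

Fixpoint shift (d c : nat) (e : pexpr) : pexpr :=
  match e with
  | EVar i => EVar (if i < c then i else i + d)
  | EZero => EZero
  | ESucc e => ESucc (shift d c e)
  | ERec b s n => ERec (shift d c b) (shift d c.+2 s) (shift d c n)
  end.

Lemma interp_shift d c e r r' :
  (forall i, r' (if i < c then i else i + d) = r i) ->
  interp (shift d c e) r' = interp e r.
Proof.
elim: e c r r' => [i|| e IH| b IHb s IHs n IHn] c r r' H //=.
- by rewrite (IH c r).
- rewrite (IHn c r) // (IHb c r) //; apply: eq_nrec => k x.
  apply: IHs => -[|[|i]] //=; rewrite !ltnS; have := H i; by case: ifP.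
Qed.

Definition weaken1 e := shift 1 0 e.
Definition weaken2 e := shift 2 0 e.
Definition weaken_under1 e := shift 1 1 e.

Lemma interp_weaken1 e x r : interp (weaken1 e) (scons x r) = interp e r.
Proof. by apply: interp_shift => i /=; rewrite addn1. Qed.

Lemma interp_weaken2 e k x r : interp (weaken2 e) (scons k (scons x r)) = interp e r.
Proof. by apply: interp_shift => i /=; rewrite addn2. Qed.

Lemma interp_weaken_under1 e k x r :
  interp (weaken_under1 e) (scons k (scons x r)) = interp e (scons k r).
Proof. by apply: interp_shift => -[|i] //=; rewrite addn1. Qed.

Fixpoint compile (e : pexpr) (k : nat) : prog :=
  match e with
  | EVar i => PProj i
  | EZero => PZero
  | ESucc e => PComp PSucc [:: compile e k]
  | ERec b s n =>
      PComp (PRec (compile b k) (compile s k.+2)) (compile n k :: mkseq PProj k)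
  end.

Lemma evals_projs a : evals (mkseq PProj (size a)) a a.
Proof.
rewrite -[in X in evals _ _ X](mkseq_nth 0 a) /mkseq.
by elim: (iota 0 (size a)) => [|i l IH] /=; constructor => //; exact: eProj.
Qed.

Lemma compile_correct e a : eval (compile e (size a)) a (interp e (nth 0 a)).
Proof.
elim: e a => [i|| e IH| b IHb s IHs n IHn] a /=.
- exact: eProj.
- exact: eZero.
- by apply: (@eComp _ _ _ [:: _]); [do !constructor | exact: eSucc].
- apply: eComp; first by constructor; [exact: IHn | exact: evals_projs].
  elim: (interp n _) => [|m IHm] /=; first by apply: eRec0.
  apply: eRecS IHm _; set x := nrec _ _ m.
  rewrite (@eq_interp s _ (nth 0 [:: m, x & a])); first exact: (IHs [:: m, x & a]).
  by case=> [|[|i]].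
Qed.

Lemma interp_computable e : computable (fun n => interp e (scons n (fun _ => 0))).
Proof.
exists (compile e 1) => n; rewrite (@eq_interp e _ (nth 0 [:: n])).
  exact: (compile_correct e [:: n]).
by case=> [|[|i]].
Qed.

Lemma computable_ext f g : (forall n, f n = g n) -> computable f -> computable g.
Proof. by move=> H [e He]; exists e => n; rewrite -H. Qed.

Definition holds e r := interp e r != 0.

Definition one := ESucc EZero.
Definition epred e := locked (ERec EZero (EVar 0) e).
Definition eadd a b := locked (ERec b (ESucc (EVar 1)) a).
Definition esub a b := locked (ERec a (epred (EVar 1)) b).
Definition eif c x y := locked (ERec y (weaken2 x) c).
Definition ebool e := locked (eif e one EZero).
Definition elt a b := locked (ebool (esub b a)).
Definition ele a b := locked (elt a (ESucc b)).
Definition eand a b := locked (eif a (ebool b) EZero).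
Definition eor a b := locked (eif a one (ebool b)).
Definition eimp a b := locked (eif a (ebool b) one).
Definition eeq a b := locked (eand (ele a b) (ele b a)).
Definition eall n b := locked (ERec one (eand (EVar 1) (weaken_under1 b)) n).
Definition eex n b := locked (ERec EZero (eor (EVar 1) (weaken_under1 b)) n).

Lemma interp_pred r e : interp (epred e) r = (interp e r).-1.
Proof. by rewrite /epred -lock /=; case: (interp e r). Qed.

Lemma interp_add r a b : interp (eadd a b) r = interp a r + interp b r.
Proof. by rewrite /eadd -lock /=; elim: (interp a r) => //= n ->. Qed.

Lemma interp_sub r a b : interp (esub a b) r = interp a r - interp b r.
Proof.
rewrite /esub -lock /=; elim: (interp b r) => [|n IH] /=; first by rewrite subn0.
by rewrite interp_pred /= IH subnS.
Qed.

Lemma interp_if r c x y :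
  interp (eif c x y) r = if holds c r then interp x r else interp y r.
Proof. by rewrite /holds /eif -lock /=; case: (interp c r) => //= n; rewrite interp_weaken2. Qed.

Lemma interp_bool r e : interp (ebool e) r = holds e r.
Proof. by rewrite /ebool -lock interp_if; case: (holds e r). Qed.

Lemma holds_bool r e : holds (ebool e) r = holds e r.
Proof. by rewrite {1}/holds interp_bool; case: (holds e r). Qed.

Lemma holds_lt r a b : holds (elt a b) r = (interp a r < interp b r).
Proof. by rewrite /elt -lock holds_bool /holds interp_sub subn_eq0 -ltnNge. Qed.

Lemma holds_le r a b : holds (ele a b) r = (interp a r <= interp b r).
Proof. by rewrite /ele -lock holds_lt. Qed.

Lemma holds_and r a b : holds (eand a b) r = holds a r && holds b r.
Proof. by rewrite /eand -lock {1}/holds interp_if interp_bool; case: (holds a r); case: (holds b r). Qed.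

Lemma holds_or r a b : holds (eor a b) r = holds a r || holds b r.
Proof. by rewrite /eor -lock {1}/holds interp_if interp_bool; case: (holds a r); case: (holds b r). Qed.

Lemma holds_imp r a b : holds (eimp a b) r = holds a r ==> holds b r.
Proof. by rewrite /eimp -lock {1}/holds interp_if interp_bool; case: (holds a r); case: (holds b r). Qed.

Lemma holds_eq r a b : holds (eeq a b) r = (interp a r == interp b r).
Proof. by rewrite /eeq -lock holds_and !holds_le eqn_leq. Qed.

Lemma iota0S n : iota 0 n.+1 = iota 0 n ++ [:: n].
Proof. by rewrite -addn1 iotaD. Qed.

Lemma holds_all r n b :
  holds (eall n b) r = all (fun x => holds b (scons x r)) (iota 0 (interp n r)).
Proof.
rewrite /eall -lock /holds /=; elim: (interp n r) => // k IH.
rewrite iota0S all_cat -IH /= andbT.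
by rewrite -/(holds _ _) holds_and /holds /= interp_weaken_under1.
Qed.

Lemma holds_ex r n b :
  holds (eex n b) r = has (fun x => holds b (scons x r)) (iota 0 (interp n r)).
Proof.
rewrite /eex -lock /holds /=; elim: (interp n r) => // k IH.
rewrite iota0S has_cat -IH /= orbF.
by rewrite -/(holds _ _) holds_or /holds /= interp_weaken_under1.
Qed.

Definition etri e := locked (ERec EZero (eadd (EVar 1) (ESucc (EVar 0))) e).
Definition etri_inv e := locked (ERec EZero
  (eif (ele (etri (ESucc (EVar 1))) (ESucc (EVar 0))) (ESucc (EVar 1)) (EVar 1)) e).
Definition eunpair2 e := locked (esub e (etri (etri_inv e))).
Definition eunpair1 e := locked (esub (etri_inv e) (eunpair2 e)).
Definition ecpair a b := locked (eadd (etri (eadd a b)) b).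
Definition ecdrop j c := locked (ERec c (eunpair2 (epred (EVar 1))) j).
Definition ecnth j c := locked (eunpair1 (epred (ecdrop j c))).
Definition ecsize c := locked (ERec EZero (eadd (EVar 1) (ebool (ecdrop (EVar 0) (weaken2 c)))) c).

Lemma interp_tri r e : interp (etri e) r = tri (interp e r).
Proof. by rewrite /etri -lock /=; elim: (interp e r) => //= n IH; rewrite interp_add /= IH. Qed.

Lemma interp_tri_inv r e : interp (etri_inv e) r = tri_inv (interp e r).
Proof.
rewrite /etri_inv -lock /=; elim: (interp e r) => //= n IH.
by rewrite interp_if holds_le interp_tri /= IH.
Qed.

Lemma interp_unpair2 r e : interp (eunpair2 e) r = unpair2 (interp e r).
Proof. by rewrite /eunpair2 -lock interp_sub interp_tri interp_tri_inv. Qed.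

Lemma interp_unpair1 r e : interp (eunpair1 e) r = unpair1 (interp e r).
Proof. by rewrite /eunpair1 -lock interp_sub interp_tri_inv interp_unpair2. Qed.

Lemma interp_cpair r a b : interp (ecpair a b) r = cpair (interp a r) (interp b r).
Proof. by rewrite /ecpair -lock interp_add interp_tri interp_add cpairE. Qed.

Lemma interp_cdrop r j c : interp (ecdrop j c) r = cdrop (interp j r) (interp c r).
Proof.
rewrite /ecdrop -lock /=; elim: (interp j r) => //= n IH.
by rewrite interp_unpair2 interp_pred /= IH.
Qed.

Lemma interp_cnth r j c : interp (ecnth j c) r = cnth (interp j r) (interp c r).
Proof. by rewrite /ecnth -lock interp_unpair1 interp_pred interp_cdrop. Qed.

Lemma interp_csize r c : interp (ecsize c) r = csize (interp c r).
Proof.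
rewrite /ecsize -lock /csize /=.
have -> : forall n, nrec 0 (fun k x => interp (eadd (EVar 1) (ebool (ecdrop (EVar 0) (weaken2 c))))
   (scons k (scons x r))) n = count (fun j => cdrop j (interp c r) != 0) (iota 0 n) => //.
elim=> // n IH; rewrite iota0S count_cat -IH /= addn0.
by rewrite interp_add interp_bool /holds interp_cdrop interp_weaken2.
Qed.

(** * Compactness of bounded trees *)

Lemma uniform_bound (N : nat) (R : nat -> nat -> Prop) :
  (forall x t t', t <= t' -> R x t -> R x t') ->
  (forall x, x <= N -> exists t, R x t) -> exists t, forall x, x <= N -> R x t.
Proof.
move=> Rmono; elim: N => [|N IH] H.
  have [t Ht] := H 0 (leqnn 0); exists t => x; rewrite leqn0 => /eqP ->; exact: Ht.
have [t1 Ht1] := IH (fun x Hx => H x (leqW Hx)).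
have [t2 Ht2] := H N.+1 (leqnn _).
exists (maxn t1 t2) => x; rewrite leq_eqVlt => /orP [/eqP ->|Hx].
- exact: Rmono (leq_maxr _ _) Ht2.
- exact: Rmono (leq_maxl _ _) (Ht1 x Hx).
Qed.

Lemma uniform_bound_dominated bs (Q : seq nat -> nat -> Prop) :
  (forall sg t t', t <= t' -> Q sg t -> Q sg t') ->
  (forall sg, dominated bs sg -> exists t, Q sg t) ->
  exists t, forall sg, dominated bs sg -> Q sg t.
Proof.
elim: bs Q => [|b bs IH] Q Qmono H.
  have [t Ht] := H [::] (conj erefl (fun _ _ => leqnn _)).
  by exists t => -[|x sg] [Hs _].
have Hx x : x <= b -> exists t, forall sg, dominated bs sg -> Q (x :: sg) t.
  move=> Hxb; apply: IH => [sg|sg Hsg]; first exact: Qmono.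
  by apply: H; apply/dominated_cons.
have [t Ht] := @uniform_bound b (fun x t => forall sg, dominated bs sg -> Q (x :: sg) t)
  (fun x t t' Htt Hx sg Hsg => Qmono _ _ _ Htt (Hx sg Hsg)) Hx.
by exists t => -[[] //|x sg] /dominated_cons [Hxb Hsg]; apply: Ht.
Qed.

Section Konig.

Variables (b : nat -> nat) (T : seq nat -> Prop).

Definition admissible (sg : seq nat) :=
  (forall j, j < size sg -> nth 0 sg j <= b j) /\ (forall j, j <= size sg -> T (take j sg)).

Definition extends_to tau K :=
  exists sg, [/\ size sg = K, admissible sg & take (size tau) sg = tau].

Definition extendable tau := forall K, size tau <= K -> extends_to tau K.

Lemma extends_to_take tau K K' :
  size tau <= K' -> K' <= K -> extends_to tau K -> extends_to tau K'.
Proof.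
move=> H1 H2 [sg [Hs [Hb HT] Ht]]; exists (take K' sg).
have Hs' : size (take K' sg) = K' by rewrite size_takel // Hs.
split=> //; last by rewrite take_takel.
split=> j; rewrite Hs' => Hj; first by rewrite nth_take //; apply: Hb; lia.
by rewrite take_takel //; apply: HT; lia.
Qed.

Lemma extendable_rcons tau : extendable tau -> exists x, extendable (rcons tau x).
Proof.
move=> H; apply: NNPP => Hn.
have Hdead x : exists K, forall K', K <= K' -> ~ extends_to (rcons tau x) K'.
  have /not_all_ex_not [K HK] : ~ extendable (rcons tau x) by move=> Hx; apply: Hn; exists x.
  exists K => K' HK' Hext; apply: HK => Hs; exact: extends_to_take Hext.
have [Km HKm] := @uniform_bound (b (size tau))
  (fun x K => forall K', K <= K' -> ~ extends_to (rcons tau x) K')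
  (fun x t t' Htt H K' HK' => H K' (leq_trans Htt HK')) (fun x _ => Hdead x).
have [sg [Hs [Hb HT] Ht]] := H (maxn Km (size tau).+1) (leq_trans (leqnSn _) (leq_maxr _ _)).
have Hlt : size tau < size sg by rewrite Hs leq_maxr.
apply: (HKm (nth 0 sg (size tau)) (Hb _ Hlt) _ (leq_maxl Km (size tau).+1)).
by exists sg; split=> //; rewrite size_rcons (take_nth 0) // Ht.
Qed.

Lemma konig : (forall K, exists sg, size sg = K /\ admissible sg) ->
  exists x : baire, forall k, T (Defs.prefix x k).
Proof.
move=> Hall.
have [nxt Hnxt] : exists nxt : seq nat -> nat,
    forall tau, extendable tau -> extendable (rcons tau (nxt tau)).
  apply: (choice (fun tau x => extendable tau -> extendable (rcons tau x))) => tau.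
  have [/extendable_rcons [x Hx]|Hn] := classic (extendable tau); first by exists x.
  by exists 0.
pose fix path k := if k is k'.+1 then rcons (path k') (nxt (path k')) else [::].
have Hpath k : extendable (path k).
  elim: k => [K _|k IH]; last exact: Hnxt.
  by have [sg [Hs Hsg]] := Hall K; exists sg; rewrite take0.
have Hsize k : size (path k) = k by elim: k => //= k IH; rewrite size_rcons IH.
exists (fun j => nth 0 (path j.+1) j) => k.
have -> : Defs.prefix (fun j => nth 0 (path j.+1) j) k = path k.
  elim: k => // k IH; rewrite /Defs.prefix mkseqS -/(Defs.prefix _ k) IH /=.
  by rewrite nth_rcons Hsize ltnn eqxx.
have [sg [Hs [_ HT] Ht]] := Hpath k k (eq_leq (Hsize k)).
by rewrite -Ht Hsize; apply: HT; rewrite Hs.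
Qed.

Lemma konig_finite_level : (forall x : baire, ~ forall k, T (Defs.prefix x k)) ->
  exists K, forall sg, size sg = K -> (forall j, j < K -> nth 0 sg j <= b j) ->
    exists2 j, j <= K & ~ T (take j sg).
Proof.
move=> Hno; apply: NNPP => Hall.
have [K|x Hx] := konig; last exact: Hno x Hx.
apply: NNPP => HK; apply: Hall; exists K => sg Hsg Hb.
apply: NNPP => Hj; apply: HK; exists sg; split=> //; split=> j; rewrite Hsg; first exact: Hb.
by move=> Hj'; apply: NNPP => HnT; apply: Hj; exists j.
Qed.

End Konig.

(** * Good strings *)

Definition trunc (p : baire) (t : nat) : baire := fun x => if x < t then p x else 0.

Lemma cnth_code_prefix p t x : cnth x (code (Defs.prefix p t)) = trunc p t x.
Proof.
rewrite cnth_code /trunc; case: ltnP => H; first by rewrite nth_mkseq.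
by rewrite nth_default // size_mkseq.
Qed.

Lemma csize_code_prefix p t : csize (code (Defs.prefix p t)) = t.
Proof. by rewrite csize_code size_mkseq. Qed.

(* [w] approximates a name of a sequence of trees, the [i]-th one being
   [fun c => w (cpair i c)]. *)
Definition exits_tree (w : baire) i v sg :=
  exists2 j, j <= size sg & w (cpair i (code (v :: take j sg))) != 0.

Definition dead (w : baire) i v bs := forall sg, dominated bs sg -> exits_tree w i v sg.

Definition good (w : baire) (s : seq nat) :=
  sorted ltn s /\ exists2 i, i < size s & dead w i (nth 0 s i) (drop i.+1 s).

Definition sortedb m := all (fun j => cnth j m < cnth j.+1 m) (iota 0 (csize m).-1).

Definition dominatedb c bnd :=
  (csize c == csize bnd) && all (fun j => cnth j c <= cnth j bnd) (iota 0 (csize c)).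

Definition prefixb d c :=
  (csize d <= csize c) && all (fun j => cnth j d == cnth j c) (iota 0 (csize d)).

(* Sequences dominated by [bs] have codes at most [code bs], so the
   quantifier over them in [dead] can be bounded. *)
Definition goodb m w :=
  sortedb m && has (fun i =>
    all (fun c => dominatedb c (cdrop i.+1 m) ==>
           has (fun d => prefixb d c && (cnth (cpair i (cpair (cnth i m) d).+1) w != 0))
               (iota 0 c.+1))
        (iota 0 (cdrop i.+1 m).+1))
  (iota 0 (csize m)).

Lemma sortedb_code s : sortedb (code s) = sorted ltn s.
Proof.
rewrite /sortedb csize_code; apply/allP/(sortedP 0) => H j.
- by move=> Hj; have := H j; rewrite !cnth_code mem_iota; apply; lia.
- by rewrite mem_iota !cnth_code => Hj; apply: H; lia.
Qed.

Lemma dominatedb_code sg bs : dominatedb (code sg) (code bs) <-> dominated bs sg.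
Proof.
rewrite /dominatedb !csize_code; split.
- by case/andP=> /eqP Hs /allP H; split=> // j Hj; have := H j; rewrite !cnth_code mem_iota; apply.
- move=> [Hs H]; rewrite Hs eqxx; apply/allP => j; rewrite mem_iota !cnth_code -Hs.
  by move=> /andP [_]; apply: H.
Qed.

Lemma prefixb_code tau sg : prefixb (code tau) (code sg) <-> exists2 j, j <= size sg & tau = take j sg.
Proof.
rewrite /prefixb !csize_code; split.
- case/andP=> Hs /allP H; exists (size tau) => //.
  apply: (@eq_from_nth _ 0); first by rewrite size_takel.
  by move=> j Hj; have := H j; rewrite mem_iota !cnth_code nth_take // => /(_ Hj) /eqP.
- move=> [j Hj ->]; rewrite size_takel // Hj; apply/allP => k.
  by rewrite mem_iota => /andP [_ Hk]; rewrite !cnth_code nth_take.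
Qed.

Lemma goodbP s c w : (forall x, cnth x c = w x) -> goodb (code s) c <-> good w s.
Proof.
move=> Ew; rewrite /goodb sortedb_code csize_code /good; split.
- case/andP=> Hs /hasP [i]; rewrite mem_iota cdrop_code => Hi /allP H.
  split=> //; exists i => // sg Hsg.
  have Hc : code sg \in iota 0 (code (drop i.+1 s)).+1.
    by rewrite mem_iota ltnS leq_code_dominated.
  have /hasP [d _] := implyP (H _ Hc) ((dominatedb_code _ _).2 Hsg).
  have [tau <-] := code_surj d; case/andP=> /prefixb_code [j Hj ->].
  by rewrite cnth_code Ew; exists j.
- case=> Hs [i Hi Hd]; rewrite Hs; apply/hasP; exists i; first by rewrite mem_iota.
  apply/allP => k _; apply/implyP; have [sg <-] := code_surj k.
  rewrite cdrop_code => /dominatedb_code /Hd [j Hj Hw]; apply/hasP.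
  exists (code (take j sg)); first by rewrite mem_iota ltnS code_take.
  by apply/andP; split; [apply/prefixb_code; exists j | rewrite cnth_code Ew].
Qed.

Lemma dead_trunc p i v bs : dead p i v bs -> exists t, dead (trunc p t) i v bs.
Proof.
move=> Hd; apply: (@uniform_bound_dominated _ (fun sg t => exits_tree (trunc p t) i v sg)).
- move=> sg t t' Htt [j Hj]; rewrite /trunc; case: ifP => // Hlt Hne.
  by exists j; rewrite ?(leq_trans Hlt Htt).
- move=> sg /Hd [j Hj Hp]; exists (cpair i (code (v :: take j sg))).+1.
  by exists j; rewrite // /trunc ltnSn.
Qed.

Definition esorted m := locked (eall (epred (ecsize m))
  (elt (ecnth (EVar 0) (weaken1 m)) (ecnth (ESucc (EVar 0)) (weaken1 m)))).

Definition edominated c bnd := locked (eand (eeq (ecsize c) (ecsize bnd))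
  (eall (ecsize c) (ele (ecnth (EVar 0) (weaken1 c)) (ecnth (EVar 0) (weaken1 bnd))))).

Definition eprefix d c := locked (eand (ele (ecsize d) (ecsize c))
  (eall (ecsize d) (eeq (ecnth (EVar 0) (weaken1 d)) (ecnth (EVar 0) (weaken1 c))))).

Definition egood m w :=
  let m1 := weaken1 m in let m2 := weaken1 m1 in let m3 := weaken1 m2 in
  let w3 := weaken1 (weaken1 (weaken1 w)) in
  eand (esorted m) (eex (ecsize m)
    (eall (ESucc (ecdrop (ESucc (EVar 0)) m1))
      (eimp (edominated (EVar 0) (ecdrop (ESucc (EVar 1)) m2))
        (eex (ESucc (EVar 0))
          (eand (eprefix (EVar 0) (EVar 1))
                (ecnth (ecpair (EVar 2) (ESucc (ecpair (ecnth (EVar 2) m3) (EVar 0)))) w3)))))).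

Lemma holds_sorted r m : holds (esorted m) r = sortedb (interp m r).
Proof.
rewrite /esorted -lock holds_all interp_pred interp_csize; apply: eq_all => j.
by rewrite holds_lt !interp_cnth !interp_weaken1.
Qed.

Lemma holds_dominated r c bnd :
  holds (edominated c bnd) r = dominatedb (interp c r) (interp bnd r).
Proof.
rewrite /edominated -lock holds_and holds_eq holds_all !interp_csize; congr (_ && _).
by apply: eq_all => j; rewrite holds_le !interp_cnth !interp_weaken1.
Qed.

Lemma holds_prefix r d c : holds (eprefix d c) r = prefixb (interp d r) (interp c r).
Proof.
rewrite /eprefix -lock holds_and holds_le holds_all !interp_csize; congr (_ && _).
by apply: eq_all => j; rewrite holds_eq !interp_cnth !interp_weaken1.
Qed.

Lemma holds_good r m w : holds (egood m w) r = goodb (interp m r) (interp w r).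
Proof.
rewrite /egood holds_and holds_sorted holds_ex interp_csize; congr (_ && _).
apply: eq_has => i; rewrite holds_all interp_succ interp_cdrop interp_succ.
rewrite interp_weaken1 interp_var scons0; apply: eq_all => c.
rewrite holds_imp holds_dominated interp_cdrop interp_succ !interp_weaken1.
rewrite !interp_var sconsS !scons0; congr (_ ==> _).
rewrite holds_ex interp_succ interp_var scons0; apply: eq_has => d.
rewrite holds_and holds_prefix /holds.
by rewrite !(interp_cnth, interp_cpair, interp_succ, interp_weaken1, interp_var, sconsS, scons0).
Qed.

(* On input [cpair n (code (p|k))], wait until [k = unpair2 n], then answer
   [phi_out p n]. *)
Definition hPhi c :=
  if csize (unpair2 c) < unpair2 (unpair1 c) then 0
  else (if goodb (unpair1 (unpair1 c)) (unpair2 c) then (unpair1 (unpair1 c)).+1 else 0).+1.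

Definition hPsi c :=
  if unpair1 (unpair1 c) < csize (unpair2 c) then (cnth (unpair1 (unpair1 c)) (unpair2 c)).+1
  else 0.

Lemma hPhi_computable : computable hPhi.
Proof.
apply: computable_ext (interp_computable
  (eif (elt (ecsize (eunpair2 (EVar 0))) (eunpair2 (eunpair1 (EVar 0)))) EZero
    (ESucc (eif (egood (eunpair1 (eunpair1 (EVar 0))) (eunpair2 (EVar 0)))
                (ESucc (eunpair1 (eunpair1 (EVar 0)))) EZero)))) => c.
by rewrite /hPhi !(interp_if, holds_lt, holds_good, interp_succ, interp_csize,
  interp_unpair1, interp_unpair2, interp_var, scons0).
Qed.

Lemma hPsi_computable : computable hPsi.
Proof.
apply: computable_ext (interp_computable
  (eif (elt (eunpair1 (eunpair1 (EVar 0))) (ecsize (eunpair2 (EVar 0))))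
    (ESucc (ecnth (eunpair1 (eunpair1 (EVar 0))) (eunpair2 (EVar 0)))) EZero)) => c.
by rewrite /hPsi !(interp_if, holds_lt, interp_succ, interp_csize, interp_cnth,
  interp_unpair1, interp_unpair2, interp_var, scons0).
Qed.

Definition phi_out (p : baire) (n : nat) : nat :=
  if goodb (unpair1 n) (code (Defs.prefix p (unpair2 n))) then (unpair1 n).+1 else 0.

Lemma runs_hPhi p : runs hPhi p (phi_out p).
Proof.
move=> n; exists (unpair2 n).
rewrite /hPhi unpair1_cpair unpair2_cpair csize_code_prefix ltnn; split=> // k Hk.
by rewrite /hPhi unpair1_cpair unpair2_cpair csize_code_prefix Hk.
Qed.

Lemma runs_hPsi y : runs hPsi y (fun n => y (unpair1 n)).
Proof.
move=> n; exists (unpair1 n).+1.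
rewrite /hPsi unpair1_cpair unpair2_cpair csize_code_prefix ltnSn cnth_code_prefix /trunc ltnSn.
split=> // k Hk; rewrite /hPsi unpair1_cpair unpair2_cpair csize_code_prefix.
by rewrite ltnNge -ltnS Hk.
Qed.

Definition phi_open (p : baire) (f : baire) : Prop :=
  incr f /\ exists2 s, (exists t, good (trunc p t) s) & Defs.prefix f (size s) = s.

Lemma enumerated_phi_out p s : enumerated (phi_out p) s <-> exists t, good (trunc p t) s.
Proof.
split.
- case=> n; rewrite /phi_out; case: ifP => // Hg [Hn]; exists (unpair2 n).
  by apply/(goodbP _ (cnth_code_prefix p _)); rewrite -Hn.
- case=> t /(goodbP _ (cnth_code_prefix p t)) Hg; exists (cpair (code s) t).
  by rewrite /phi_out unpair1_cpair unpair2_cpair Hg.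
Qed.

Lemma names_phi_open p : @names openspace (phi_out p) (phi_open p).
Proof.
split=> [s /enumerated_phi_out [t [Hs _]] //|f].
rewrite /phi_open; split=> -[Hf Hs]; split=> //.
- by case: Hs => s /enumerated_phi_out Ht Hfs; exists s.
- by case: Hs => s [/enumerated_phi_out Ht Hfs]; exists s.
Qed.

Lemma incr_ge f n : incr f -> n <= f n.
Proof. by move=> Hf; elim: n => // n IH; exact: leq_ltn_trans IH (Hf n). Qed.

Lemma sorted_prefix_incr f k : incr f -> sorted ltn (Defs.prefix f k).
Proof.
move=> Hf; apply/(sortedP 0) => j; rewrite size_mkseq => Hj.
by rewrite !nth_mkseq //; [exact: Hf | lia].
Qed.

Lemma take_prefix x j k : j <= k -> take j (Defs.prefix x k) = Defs.prefix x j.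
Proof. by move=> Hj; rewrite /Defs.prefix /mkseq -map_take take_iota (minn_idPl Hj). Qed.

Lemma fast_subsequence (f : baire) (M : nat -> nat) (W : nat -> nat -> baire) :
  incr f -> exists g, [/\ incr g, forall k, M k <= f (g k)
                       & forall i j, W i (f (g i)) j <= f (g (i.+1 + j))].
Proof.
move=> Hf.
(* The second component bounds [W i (f (g i)) (l - i.+1)] for all [i <= k]. *)
pose fix st k := if k is k'.+1 then
    let g' := (st k').1 + 1 + M k + (st k').2 k in
    (g', fun l => maxn ((st k').2 l) (W k (f g') (l - k.+1)))
  else (M 0, fun l => W 0 (f (M 0)) (l - 1)).
pose g k := (st k).1; pose D k := (st k).2.
have HgS k : g k.+1 = g k + 1 + M k.+1 + D k k.+1 by [].
have HgM k : M k <= g k by case: k => [|k] //; rewrite HgS; lia.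
have HD k i l : i <= k -> W i (f (g i)) (l - i.+1) <= D k l.
  elim: k => [|k IH] in i *; first by rewrite leqn0 => /eqP ->.
  rewrite leq_eqVlt => /orP [/eqP ->|Hi]; first exact: leq_maxr.
  exact: leq_trans (IH i Hi) (leq_maxl _ _).
exists g; split=> [k|k|i j]; first by rewrite HgS; lia.
- exact: leq_trans (HgM k) (incr_ge _ Hf).
- have := HD (i + j) i (i + j).+1 (leq_addr _ _); rewrite subSS addKn => /leq_trans; apply.
  by apply: leq_trans (incr_ge _ Hf); rewrite addSn HgS; lia.
Qed.

Lemma dominated_path_not_dead p t i v bs x :
  closed_set_of (fun c => p (cpair i c)) (v, x) ->
  (forall j, j < size bs -> x j <= nth 0 bs j) -> ~ dead (trunc p t) i v bs.
Proof.
move=> Hx Hbs /(_ (Defs.prefix x (size bs))) [].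
  by split=> [|j]; rewrite size_mkseq // => Hj; rewrite nth_mkseq //; apply: Hbs.
move=> j; rewrite size_mkseq => Hj; rewrite take_prefix // /trunc.
by have /= -> := Hx j; case: ifP.
Qed.

Lemma phi_open_dom p xs :
  @names (seqspace sigma11space) p xs -> mdom (parallel Ccof_Sigma11_N) xs ->
  mdom wFindHS_Pi01 (phi_open p).
Proof.
move=> Hp Hdom f [[Hf [Hall|Hnone]] HPf]; last exact: Hnone id (fun n => ltnSn n) HPf.
have [M HM] : exists M : nat -> nat, forall i n, M i <= n -> xs i n.
  by apply: (choice (fun i m => forall n, m <= n -> xs i n)) => i; case: (Hdom i).
have [W HW] : exists W : nat -> nat -> baire,
    forall i n, xs i n -> closed_set_of (fun c => p (cpair i c)) (n, W i n).
  apply: (choice (fun i Wi => forall n, xs i n -> closed_set_of _ (n, Wi n))) => i.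
  apply: (choice (fun n x => xs i n -> closed_set_of _ (n, x))) => n.
  by have [/(Hp i) [x Hx]|Hn] := classic (xs i n); [exists x | exists (fun=> 0)].
have [g [Hg HgM HgW]] := fast_subsequence M W Hf.
have [_ [s [t [_ [i Hi Hd]]] Hfs]] := Hall g Hg.
have Hs j : j < size s -> nth 0 s j = f (g j) by move=> Hj; rewrite -Hfs nth_mkseq.
apply: (@dominated_path_not_dead p t i _ _ (W i (f (g i))) _ _ Hd).
  by rewrite Hs //; apply/HW/HM.
by move=> j; rewrite size_drop => Hj; rewrite nth_drop Hs; [exact: HgW | lia].
Qed.

Lemma phi_open_solution p xs y i :
  @names (seqspace sigma11space) p xs -> incr y -> ~ phi_open p y -> xs i (y i).
Proof.
move=> Hp Hy HnP; apply: NNPP => Hni.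
have [K HK] := @konig_finite_level (fun j => y (i.+1 + j))
  (fun tau => p (cpair i (code (y i :: tau))) = 0)
  (fun x Hx => Hni ((Hp i (y i)).2 (ex_intro _ x Hx))).
pose s := Defs.prefix y (i.+1 + K).
have Hs j : j < i.+1 + K -> nth 0 s j = y j by move=> Hj; rewrite nth_mkseq.
have [t Ht] : exists t, dead (trunc p t) i (y i) (drop i.+1 s).
  apply: dead_trunc => sg [Hsz Hle].
  have Hsg : size sg = K by rewrite Hsz size_drop size_mkseq; lia.
  have [|j Hj /eqP HnT] := HK sg Hsg; last by exists j; rewrite ?Hsg.
  by move=> j Hj; have := Hle j; rewrite Hsg nth_drop Hs; [apply | lia].
apply: HnP; split=> //; exists s; last by rewrite size_mkseq.
exists t; split; first exact: sorted_prefix_incr.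
by exists i; rewrite ?size_mkseq ?Hs //; lia.
Qed.

Theorem mainTheorem6 :
  sW_reducible (parallel Ccof_Sigma11_N) wFindHS_Pi01.
Proof.
exists hPhi, hPsi; split; first exact: hPhi_computable.
split; first exact: hPsi_computable.
move=> G HG p xs Hp Hdom.
exists (phi_out p); split; first exact: runs_hPhi.
have [y [[_ HnP] [Hy HGy]]] := HG _ _ (names_phi_open p) (phi_open_dom Hp Hdom).
exists (fun n => G (phi_out p) (unpair1 n)); split; first exact: runs_hPsi.
exists y; split=> i; first exact: phi_open_solution Hp Hy HnP.
by rewrite /= unpair1_cpair HGy.
Qed.
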